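(* Let $(Q,P)$ be a weakly quasi-lattice ordered group and let $\Lambda$ be a $P$-graph with $\mathrm{FA}(\Lambda)\neq\emptyset$. Then the path groupoid $\mathcal{G}(\Lambda)$ and the boundary-path groupoid $\partial\mathcal{G}(\Lambda)$ are ample, second-countable and Hausdorff.
   Context: $(Q,P)$ weakly quasi-lattice ordered: $Q$ a discrete group, $P\subseteq Q$ a subsemigroup containing the identity $e$ with $P\cap P^{-1}=\{e\}$, and, with $p\le r$ meaning $pq=r$ for some $q\in P$, any two elements of $P$ with a common upper bound have a least common upper bound. A $P$-graph is a countable small category $\Lambda$ (identities $\Lambda^{(0)}$, range/source $r,s$) with a functor $d:\Lambda\to P$ with unique factorisation (if $d(\lambda)=pq$ then there are unique $\mu,\nu$ with $\lambda=\mu\nu$, $d(\mu)=p$, $d(\nu)=q$). Write $\Lambda^m=d^{-1}(m)$, $\lambda\Lambda=\{\lambda\mu: s(\lambda)=r(\mu)\}$, $\mu\preceq\lambda$ iff $\lambda\in\mu\Lambda$. $\mathrm{FA}(\Lambda)$ is the set of $\lambda$ such that for all $\mu\in\lambda\Lambda,\nu\in\Lambda$ there is finite $J\subseteq\Lambda$ with $\mu\Lambda\cap\nu\Lambda=\bigcup_{\kappa\in J}\kappa\Lambda$. A filter is a nonempty hereditary and directed subset of $\Lambda$ (w.r.t. $\preceq$); $\mathcal{F}(\Lambda)$ the filters, $\mathcal{U}(\Lambda)$ the maximal filters. $\mathcal{P}(\Lambda)$ has the product topology from $\{0,1\}^\Lambda$; subsets have subspace topology. Path space $\mathcal{X}(\Lambda)=\{x\in\mathcal{F}(\Lambda):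 x\cap\mathrm{FA}(\Lambda)\neq\emptyset\}$; boundary-path space $\partial\mathcal{X}(\Lambda)$ = closure of $\mathcal{U}(\Lambda)\cap\mathcal{X}(\Lambda)$ in $\mathcal{X}(\Lambda)$. For $x\in\mathcal{X}(\Lambda)$ and $m\in P$ with $x\cap\Lambda^m\neq\emptyset$ (write $x\in\mathrm{dom}(m)$), let $x(0,m)$ be the unique element of $x\cap\Lambda^m$ and $x\cdot m=\{\mu: x(0,m)\mu\in x\}\in\mathcal{X}(\Lambda)$. The path groupoid $\mathcal{G}(\Lambda)$ is the set of $(x,q,y)\in\mathcal{X}(\Lambda)\times Q\times\mathcal{X}(\Lambda)$ for which there are $m,n\in P$ with $q=mn^{-1}$, $x\in\mathrm{dom}(m)$, $y\in\mathrm{dom}(n)$, $x\cdot m=y\cdot n$; composable pairs are $((x,q,y),(y,r,z))$ with product $(x,qr,z)$, inverse $(x,q,y)^{-1}=(y,q^{-1},x)$; its topology has basis the sets $\{(x,mn^{-1},y)\in\mathcal{G}(\Lambda): x\in U, y\in V, x\cdot m=y\cdot n\}$ for $m,n\in P$ and $U,V\subseteq\mathcal{X}(\Lambda)$ open. The unit space is identified with $\mathcal{X}(\Lambda)$ via $x\mapsto(x,e,x)$. The boundary-path groupoid $\partial\mathcal{G}(\Lambda)$ is the reduction $\{g\in\mathcal{G}(\Lambda): r(g),s(g)\in\partial\mathcal{X}(\Lambda)\}$ with the subspace topology. A topological groupoid is étale if it is locally compact with locally compact Hausdorff unit space and the source map is a local homeomorphism; ample if moreover the unit space has a basis of compact open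 sets. *)

From HB Require Import structures.
From mathcomp Require Import all_boot monoid.
From mathcomp Require Import boolp classical_sets cardinality.

Set Implicit Arguments.
Unset Strict Implicit.
Unset Printing Implicit Defensive.

Local Open Scope classical_set_scope.
Local Open Scope group_scope.

Definition qle (Q : groupType) (P : set Q) (p r : Q) : Prop :=
  exists q, P q /\ p * q = r.

Definition wqlo (Q : groupType) (P : set Q) : Prop :=
  [/\ P 1,
      (forall p q, P p -> P q -> P (p * q)),
      (forall p, P p -> P p^-1 -> p = 1) &
      (forall p q, P p -> P q ->
         (exists r, P r /\ qle P p r /\ qle P q r) ->
         exists r, [/\ P r, qle P p r, qle P q r &
                    forall r', P r' -> qle P p r' -> qle P q r' -> qle P r r'])].

Record category := Category {
  mor : Type;
  obj : Type;
  src : mor -> obj;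
  rng : mor -> obj;
  idm : obj -> mor;
  comp : mor -> mor -> mor;   (* comp a b = ab, defined when src a = rng b *)
  src_idm : forall v, src (idm v) = v;
  rng_idm : forall v, rng (idm v) = v;
  src_comp : forall a b, src a = rng b -> src (comp a b) = src b;
  rng_comp : forall a b, src a = rng b -> rng (comp a b) = rng a;
  comp_idl : forall a, comp (idm (rng a)) a = a;
  comp_idr : forall a, comp a (idm (src a)) = a;
  comp_assoc : forall a b c, src a = rng b -> src b = rng c ->
                 comp a (comp b c) = comp (comp a b) c
}.

Definition is_Pgraph (Q : groupType) (P : set Q) (C : category)
    (d : mor C -> Q) : Prop :=
  [/\ countable [set: mor C],
      (forall l, P (d l)),
      (forall v, d (idm v) = 1),
      (forall a b, src a = rng b -> d (comp a b) = d a * d b) &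
      (forall l p q, P p -> P q -> d l = p * q ->
         exists! mn : mor C * mor C,
           [/\ src mn.1 = rng mn.2, l = comp mn.1 mn.2, d mn.1 = p & d mn.2 = q])].

Section PGraph.
Variables (Q : groupType) (P : set Q) (C : category) (d : mor C -> Q).
Local Notation Lam := (mor C).

Definition ext (l : Lam) : set Lam :=
  [set m | exists n, src l = rng n /\ m = comp l n].

Definition prec (m l : Lam) : Prop := ext m l.

Definition FA : set Lam :=
  [set l | forall m n, ext l m ->
     exists J : set Lam, finite_set J /\
       ext m `&` ext n = \bigcup_(k in J) ext k].

Definition is_filter (x : set Lam) : Prop :=
  [/\ x !=set0,
      (forall m l, prec m l -> x l -> x m) &
      (forall l m, x l -> x m -> exists n, [/\ x n, prec l n & prec m n])].

Definition maximal_filter (x : set Lam) : Prop :=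
  is_filter x /\ forall y, is_filter y -> x `<=` y -> y = x.

(* product topology on P(Lambda) = {0,1}^Lambda: basic open sets *)
Definition cyl (F G : set Lam) : set (set Lam) :=
  [set x | F `<=` x /\ G `&` x = set0].

Definition pow_open (U : set (set Lam)) : Prop :=
  forall x, U x -> exists F G, [/\ finite_set F, finite_set G, cyl F G x &
                                 cyl F G `<=` U].

End PGraph.

(* Generic topology on subsets: a space is a carrier A : set T together with *)
(* a family O of open sets (subsets of A).                                   *)
Section Topology.
Variables (T : Type).

Definition subspace_opens (O : set (set T)) (A : set T) : set (set T) :=
  [set V | exists U, O U /\ V = U `&` A].

Definition closure_in (A : set T) (O : set (set T)) (S : set T) : set T :=
  [set x | A x /\ forall U, O U -> U x -> U `&` S !=set0].

Definition is_hausdorff (A : set T) (O : set (set T)) : Prop :=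
  forall x y, A x -> A y -> x <> y ->
    exists U V, [/\ O U, O V, U x, V y & U `&` V = set0].

Definition is_compact (A : set T) (O : set (set T)) (K : set T) : Prop :=
  K `<=` A /\
  forall Cv : set (set T), Cv `<=` O -> K `<=` \bigcup_(U in Cv) U ->
    exists D, [/\ finite_set D, D `<=` Cv & K `<=` \bigcup_(U in D) U].

Definition locally_compact (A : set T) (O : set (set T)) : Prop :=
  forall x, A x -> exists U K, [/\ O U, U x, U `<=` K & is_compact A O K].

Definition second_countable (A : set T) (O : set (set T)) : Prop :=
  exists B : set (set T), [/\ countable B, B `<=` O &
     forall U x, O U -> U x -> exists V, [/\ B V, V x & V `<=` U]].

Definition compact_open_basis (A : set T) (O : set (set T)) : Prop :=
  forall U x, O U -> U x -> exists K, [/\ O K, is_compact A O K, K x & K `<=` U].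

End Topology.

Section Maps.
Variables (T U : Type).

Definition continuous_on (A : set T) (OA : set (set T)) (B : set U)
    (OB : set (set U)) (f : T -> U) : Prop :=
  (forall x, A x -> B (f x)) /\ forall V, OB V -> OA (A `&` f @^-1` V).

Definition local_homeo (A : set T) (OA : set (set T)) (B : set U)
    (OB : set (set U)) (f : T -> U) : Prop :=
  (forall x, A x -> B (f x)) /\
  forall x, A x -> exists W, [/\ OA W, W x, OB (f @` W),
    (forall y z, W y -> W z -> f y = f z -> y = z) &
    ((forall V, OA V -> V `<=` W -> OB (f @` V)) /\
     (forall V, OB V -> OA (W `&` f @^-1` V)))].

End Maps.

Section Groupoids.
Variables (Tg Tu : Type).
Variables (G : set Tg) (OG : set (set Tg)) (X : set Tu) (OX : set (set Tu)).
Variables (s r : Tg -> Tu) (mul : Tg -> Tg -> Tg) (inv : Tg -> Tg).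

Definition topological_groupoid : Prop :=
  continuous_on G OG G OG inv /\
  forall g h, G g -> G h -> s g = r h -> forall W, OG W -> W (mul g h) ->
    exists U V, [/\ OG U, OG V, U g, V h &
      forall g' h', U g' -> V h' -> G g' -> G h' -> s g' = r h' -> W (mul g' h')].

Definition etale : Prop :=
  [/\ topological_groupoid, locally_compact G OG, locally_compact X OX,
      is_hausdorff X OX & local_homeo G OG X OX s].

Definition ample : Prop := etale /\ compact_open_basis X OX.

End Groupoids.

Section PathGroupoid.
Variables (Q : groupType) (P : set Q) (C : category) (d : mor C -> Q).
Local Notation Lam := (mor C).
Local Notation pt := (set Lam).
Local Notation arrow := (pt * Q * pt)%type.

Definition path_space : set pt :=
  [set x | is_filter x /\ x `&` @FA C !=set0].

Definition path_opens : set (set pt) :=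
  subspace_opens (@pow_open C) path_space.

Definition bpath_space : set pt :=
  closure_in path_space path_opens (@maximal_filter C `&` path_space).

Definition bpath_opens : set (set pt) :=
  subspace_opens path_opens bpath_space.

Definition pdom (m : Q) (x : pt) : Prop := exists l, x l /\ d l = m.

(* x . m = { mu | x(0,m) mu in x } ; x(0,m) is the (unique) element of
   x with degree m *)
Definition shift (m : Q) (x : pt) : pt :=
  [set mu | exists l, [/\ x l, d l = m, src l = rng mu & x (comp l mu)]].

Definition path_groupoid : set arrow :=
  [set g | [/\ path_space g.1.1, path_space g.2 &
    exists m n, [/\ P m /\ P n, g.1.2 = m * n^-1, pdom m g.1.1, pdom n g.2 &
                   shift m g.1.1 = shift n g.2]]].

Definition gbasic (m n : Q) (U V : set pt) : set arrow :=
  [set g | [/\ path_groupoid g, g.1.2 = m * n^-1, U g.1.1, V g.2 &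
              [/\ pdom m g.1.1, pdom n g.2 & shift m g.1.1 = shift n g.2]]].

Definition groupoid_opens : set (set arrow) :=
  [set W | W `<=` path_groupoid /\
     forall g, W g -> exists m n U V,
       [/\ P m /\ P n, path_opens U, path_opens V, gbasic m n U V g &
           gbasic m n U V `<=` W]].

Definition bpath_groupoid : set arrow :=
  [set g | [/\ path_groupoid g, bpath_space g.1.1 & bpath_space g.2]].

Definition bgroupoid_opens : set (set arrow) :=
  subspace_opens groupoid_opens bpath_groupoid.

Definition gsrc (g : arrow) : pt := g.2.
Definition grng (g : arrow) : pt := g.1.1.
Definition gmul (g h : arrow) : arrow := (g.1.1, g.1.2 * h.1.2, h.2).
Definition ginv (g : arrow) : arrow := (g.2, g.1.2^-1, g.1.1).

End PathGroupoid.

(* As Λ is countable, a diagonal argument shows that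
   every cylinder through a finitely aligned path is compact: finite alignment
   is exactly what makes a limit of filters directed.  An arrow
   (x, d l (d l')^-1, y) says that x and y have the same tail after l ∈ x and
   l' ∈ y, so that x is y with its initial segment l' regrafted to l.  Finite
   alignment of l makes each coordinate of the regrafted path depend on finitely
   many coordinates of y; hence regrafting is continuous, and the arrows from
   Z(l') to Z(l) of degree d l (d l')^-1 form a compact open bisection on which
   the source map is a homeomorphism onto Z(l').  Regrafting also preserves
   maximal filters, so the boundary-path space is a closed invariant subspace
   and everything restricts to the boundary-path groupoid. *)

From HB Require Import structures.
From mathcomp Require Import all_boot monoid.
From mathcomp Require Import boolp classical_sets cardinality.

Set Implicit Arguments.
Unset Strict Implicit.
Unset Printing Implicit Defensive.

Local Open Scope classical_set_scope.
Local Open Scope group_scope.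

(** * General topology *)

Section Topology.
Variable T : Type.
Implicit Types (A B S K : set T) (O : set (set T)).

Lemma subspace_hausdorff A O B : is_hausdorff A O -> B `<=` A ->
  is_hausdorff B (subspace_opens O B).
Proof.
move=> H BA x y Bx By nxy; have [U [V [OU OV Ux Vy dis]]] := H x y (BA _ Bx) (BA _ By) nxy.
exists (U `&` B), (V `&` B); split => //; try by [exists U | exists V].
by rewrite setIACA setIid dis set0I.
Qed.

Lemma subspace_second_countable A O B : second_countable A O ->
  second_countable B (subspace_opens O B).
Proof.
move=> [Bs [cB sB H]]; exists ((fun V => V `&` B) @` Bs); split.
- exact: (sub_countable (card_image_le _ _) cB).
- by move=> _ [V BV <-]; exists V; split => //; apply: sB.
move=> _ x [U [OU ->]] [Ux Bx]; have [V [BV Vx VU]] := H U x OU Ux.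
by exists (V `&` B); split; [exists V | | apply: setSI].
Qed.

Lemma compact_subspace A O B K : K `<=` B -> is_compact A O K ->
  is_compact B (subspace_opens O B) K.
Proof.
move=> KB [_ cK]; split => // Cv CvO cov.
set Cv' := [set U | O U /\ Cv (U `&` B)].
have cov' : K `<=` \bigcup_(U in Cv') U.
  move=> k Kk; have [V CV Vk] := cov k Kk; have [U [OU E]] := CvO V CV.
  by exists U; [split; rewrite -?E | move: Vk; rewrite E => -[]].
have [D [fD sD cD]] := cK Cv' (fun U => @proj1 _ _) cov'.
exists ((fun U => U `&` B) @` D); split; first exact: finite_image.
  by move=> _ [U /sD [_ CU] <-].
move=> k Kk; have [U DU Uk] := cD k Kk.
by exists (U `&` B); [exists U | split => //; apply: KB].
Qed.

Lemma compact_setI_closed A O S K : is_compact A O K ->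
  (forall a, A a -> ~ S a -> exists U, [/\ O U, U a & U `&` S = set0]) ->
  is_compact A O (K `&` S).
Proof.
move=> [KA cK] cl; split; first by move=> z [/KA].
move=> Cv CvO cov.
set Cv' := Cv `|` [set U | O U /\ U `&` S = set0].
have Cv'O : Cv' `<=` O by move=> U [/CvO|[]].
have cov' : K `<=` \bigcup_(U in Cv') U.
  move=> k Kk; have [Sk|nSk] := pselect (S k).
    by have [V CV Vk] := cov k (conj Kk Sk); exists V => //; left.
  by have [U [OU Uk dis]] := cl k (KA _ Kk) nSk; exists U => //; right.
have [D [fD sD cD]] := cK Cv' Cv'O cov'.
exists (D `&` Cv); split; [exact: finite_setIl | by move=> U [] |].
move=> z [Kz Sz]; have [U DU Uz] := cD z Kz.
have [CU|[_ dis]] := sD U DU; first by exists U.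
by have : (U `&` S) z by []; rewrite dis.
Qed.

Lemma compact_open_basis_locally_compact A O : O A ->
  compact_open_basis A O -> locally_compact A O.
Proof.
by move=> OA cob x Ax; have [K [OK cK Kx _]] := cob A x OA Ax; exists K, K; split.
Qed.

Lemma compact_injective_open_map U (A : set T) (O : set (set T)) (B : set U)
    (O' : set (set U)) (f : T -> U) (K : set T) :
  K `<=` A -> (forall x y, K x -> K y -> f x = f y -> x = y) ->
  (forall W, O W -> O' (f @` (W `&` K))) -> is_compact B O' (f @` K) ->
  is_compact A O K.
Proof.
move=> KA finj fopen [_ cfK]; split => // Cv CvO cov.
set Cv' := [set f @` (W `&` K) | W in Cv].
have Cv'O : Cv' `<=` O' by move=> _ [W CW <-]; apply/fopen/CvO.
have cov' : f @` K `<=` \bigcup_(V in Cv') V.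
  move=> _ [x Kx <-]; have [W CW Wx] := cov x Kx.
  by exists (f @` (W `&` K)); [exists W | exists x].
have [D' [fD' sD' cD']] := cfK Cv' Cv'O cov'.
have pick V : exists W, D' V -> Cv W /\ V = f @` (W `&` K).
  have [/sD' [W CW <-]|nD] := pselect (D' V); first by exists W.
  by exists set0.
have [w Hw] := boolp.choice pick.
exists (w @` D'); split; [exact: finite_image | by move=> _ [V /Hw [? _] <-] |].
move=> x Kx; have [V D'V] := cD' (f x) (ex_intro2 _ _ x Kx erefl).
have [CW ->] := Hw V D'V => -[x' [Wx' Kx'] /(finj _ _ Kx' Kx) <-].
by exists (w V); first by exists V.
Qed.

Lemma topological_groupoid_restrict Tg Tu (G B : set Tg) (OG : set (set Tg))
    (s r : Tg -> Tu) (mul : Tg -> Tg -> Tg) (inv : Tg -> Tg) :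
  topological_groupoid G OG s r mul inv -> B `<=` G -> (forall W, OG W -> W `<=` G) ->
  (forall g, B g -> B (inv g)) ->
  (forall g h, B g -> B h -> s g = r h -> G (mul g h) -> B (mul g h)) ->
  topological_groupoid B (subspace_opens OG B) s r mul inv.
Proof.
move=> [[_ inv_cont] mul_cont] BG OG_G Binv Bmul; split.
  split => // _ [V [OV ->]]; exists (G `&` inv @^-1` V); split; first exact: inv_cont.
  apply/seteqP; split; first by move=> g [Bg [Vg _]]; split => //; split => //; apply: BG.
  by move=> g [[_ Vg] Bg]; split => //; split => //; apply: Binv.
move=> g h Bg Bh gh _ [W [OW ->]] [Wgh _].
have [U [V [OU OV Ug Vh H]]] := mul_cont g h (BG _ Bg) (BG _ Bh) gh W OW Wgh.
exists (U `&` B), (V `&` B); split; [by exists U | by exists V | by [] | by [] |].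
move=> g' h' [Ug' _] [Vh' _] Bg' Bh' gh'.
have Wm := H g' h' Ug' Vh' (BG _ Bg') (BG _ Bh') gh'.
by split => //; apply: Bmul => //; apply: OG_G Wm.
Qed.

End Topology.

Section Cylinders.
Variable C : category.
Implicit Types (a : mor C) (x F G : set (mor C)).

Lemma cylP F G x : cyl F G x <-> (F `<=` x /\ forall a, G a -> ~ x a).
Proof.
split.
  by move=> [h1 h2]; split => // a Ga xa; have : (G `&` x) a by []; rewrite h2.
by move=> [h1 h2]; split => //; apply/seteqP; split => // a [Ga xa]; exact: h2 Ga xa.
Qed.

Lemma cylU F1 G1 F2 G2 : cyl (F1 `|` F2) (G1 `|` G2) = cyl F1 G1 `&` cyl F2 G2.
Proof.
apply/seteqP; split => x.
  move=> /cylP [s h]; split; apply/cylP.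
    by split=> a ? ; [apply: s | apply: h]; left.
  by split=> a ? ; [apply: s | apply: h]; right.
move=> [/cylP [s1 h1] /cylP [s2 h2]]; apply/cylP.
by split; [move=> a [/s1|/s2] | move=> a [/h1|/h2]].
Qed.

End Cylinders.

(** * Filters and tails in a P-graph *)

Section PGraphFilters.
Variables (Q : groupType) (P : set Q) (C : category) (d : mor C -> Q).
Hypothesis HG : is_Pgraph P d.
Local Notation Lam := (mor C).
Implicit Types (a b c k l m n r nu mu : Lam) (x y w z : set Lam).

Lemma mor_countable : countable [set: Lam]. Proof. by case: HG. Qed.

Lemma degP l : P (d l). Proof. by case: HG. Qed.

Lemma deg_comp a b : src a = rng b -> d (comp a b) = d a * d b.
Proof. by case: HG => _ _ _ H _; apply: H. Qed.

Lemma factor_uniq a1 b1 a2 b2 : src a1 = rng b1 -> src a2 = rng b2 ->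
  comp a1 b1 = comp a2 b2 -> d a1 = d a2 -> a1 = a2 /\ b1 = b2.
Proof.
move=> s1 s2 e da.
have db : d b1 = d b2.
  by apply: (@mulgI _ (d a1)); rewrite -deg_comp // e deg_comp // da.
case: HG => _ _ _ _ /(_ (comp a1 b1) (d a1) (d b1) (degP _) (degP _) (deg_comp s1)).
move=> [[m1 m2] [_ U]].
have E1 := U (a1, b1) (And4 s1 erefl erefl erefl).
have E2 := U (a2, b2) (And4 s2 e (esym da) (esym db)).
by rewrite E1 in E2; case: E2.
Qed.

Lemma compI l a b : src l = rng a -> src l = rng b -> comp l a = comp l b -> a = b.
Proof. by move=> ha hb e; case: (factor_uniq ha hb e erefl). Qed.

Lemma prec_refl l : prec l l.
Proof. by exists (idm (src l)); rewrite rng_idm comp_idr. Qed.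

Lemma prec_comp l n : src l = rng n -> prec l (comp l n).
Proof. by move=> h; exists n. Qed.

Lemma prec_trans a b c : prec a b -> prec b c -> prec a c.
Proof.
move=> [n1 [h1 ->]] [n2 [h2 ->]]; rewrite src_comp // in h2.
by rewrite -comp_assoc //; apply: prec_comp; rewrite rng_comp.
Qed.

Lemma FA_prec k r : FA k -> prec k r -> FA r.
Proof. by move=> Fk kr m n rm; apply: Fk; apply: prec_trans kr rm. Qed.

Lemma filter_downward x m l : is_filter x -> x l -> prec m l -> x m.
Proof. by move=> [_ H _] xl pm; apply: H xl. Qed.

Lemma filter_directed x l m : is_filter x -> x l -> x m ->
  exists n, [/\ x n, prec l n & prec m n].
Proof. by move=> [_ _ H]; apply: H. Qed.

Lemma filter_deg_uniq x l1 l2 : is_filter x -> x l1 -> x l2 -> d l1 = d l2 -> l1 = l2.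
Proof.
move=> fx x1 x2 e.
have [n [_ [a1 [h1 E1]] [a2 [h2 E2]]]] := filter_directed fx x1 x2.
by case: (factor_uniq h1 h2 (etrans (esym E1) E2) e).
Qed.

(* The paper's [x . m = y . n] for [m = d l], [n = d l'], [x(0,m) = l] and
   [y(0,n) = l'] (cf. [shift_eq_tail]). *)
Definition tail_eq l l' x y :=
  [/\ x l, y l', src l = src l' &
      forall nu, rng nu = src l -> (x (comp l nu) <-> y (comp l' nu))].

Lemma shiftP x l nu : is_filter x -> x l ->
  (shift d (d l) x nu <-> src l = rng nu /\ x (comp l nu)).
Proof.
move=> fx xl; split; last by move=> [h1 h2]; exists l.
by move=> [l0 [x0 /(filter_deg_uniq fx x0 xl) e0 s0 c0]]; subst l0.
Qed.

Lemma shift_eq_tail x y l l' : is_filter x -> is_filter y -> x l -> y l' ->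
  (shift d (d l) x = shift d (d l') y <-> tail_eq l l' x y).
Proof.
move=> fx fy xl yl; split.
  move=> E; have hs : src l = src l'.
    have : shift d (d l) x (idm (src l)).
      by apply/(shiftP _ fx xl); rewrite rng_idm comp_idr.
    by rewrite E => /(shiftP _ fy yl) [-> _]; rewrite rng_idm.
  split => // nu hnu; split => h.
    have : shift d (d l) x nu by apply/(shiftP _ fx xl).
    by rewrite E => /(shiftP _ fy yl) [].
  have : shift d (d l') y nu by apply/(shiftP _ fy yl); rewrite -hs hnu.
  by rewrite -E => /(shiftP _ fx xl) [].
move=> [_ _ hs H]; apply/seteqP; split => nu.
  move=> /(shiftP _ fx xl) [h1 h2]; apply/(shiftP _ fy yl).
  by split; [rewrite -hs | apply/(H _ (esym h1))].
move=> /(shiftP _ fy yl) [h1 h2]; apply/(shiftP _ fx xl).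
by split; [rewrite hs | apply/H => //; rewrite -h1 hs].
Qed.

Lemma tail_eq_sym l l' x y : tail_eq l l' x y -> tail_eq l' l y x.
Proof.
move=> [h1 h2 hs H]; split => // nu hnu.
by apply: iff_sym; apply: H; rewrite hnu hs.
Qed.

Lemma tail_eq_ext l l' x y a : tail_eq l l' x y -> rng a = src l ->
  x (comp l a) -> tail_eq (comp l a) (comp l' a) x y.
Proof.
move=> [h1 h2 hs H] ha xa.
have ha' : src l' = rng a by rewrite -hs ha.
split => //; first by apply/(H _ ha).
  by rewrite !src_comp // ha.
move=> nu; rewrite src_comp // => hnu.
by rewrite -!comp_assoc //; apply: H; rewrite rng_comp.
Qed.

Lemma tail_eq_ext_r l l' x y a : tail_eq l l' x y -> rng a = src l' ->
  y (comp l' a) -> tail_eq (comp l a) (comp l' a) x y.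
Proof. by move=> A ha ya; apply/tail_eq_sym/tail_eq_ext => //; apply: tail_eq_sym. Qed.

Lemma tail_eq_restr_sub k k' g x y : is_filter x -> is_filter y -> y k' ->
  src k = rng g -> src k' = rng g ->
  tail_eq (comp k g) (comp k' g) x y ->
  forall nu, rng nu = src k -> x (comp k nu) -> y (comp k' nu).
Proof.
move=> fx fy yk' hk hk' [h1 h2 hs H] nu hnu xnu.
have [r [xr [b1 [hb1 E1]] [b2 [hb2 E2]]]] := filter_directed fx xnu h1.
rewrite src_comp // in hb1; rewrite src_comp // in hb2.
rewrite -comp_assoc // in E1; rewrite -comp_assoc // in E2.
have e : comp nu b1 = comp g b2.
  by apply: (@compI k); rewrite ?rng_comp // -?E1.
have := H b2; rewrite src_comp // => /(_ (esym hb2)) /iffLR.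
rewrite -comp_assoc // -E2 => /(_ xr).
have hk'nu : src k' = rng nu by rewrite hk' -hk.
rewrite -comp_assoc // -e comp_assoc // => /(filter_downward fy); apply.
by apply: prec_comp; rewrite src_comp.
Qed.

Lemma tail_eq_restr k k' g x y : is_filter x -> is_filter y -> x k -> y k' ->
  src k = rng g -> src k' = rng g ->
  tail_eq (comp k g) (comp k' g) x y -> tail_eq k k' x y.
Proof.
move=> fx fy xk yk' hk hk' A; split => //; first by rewrite hk hk'.
move=> nu hnu; split; first exact: (tail_eq_restr_sub fx fy yk' hk hk' A).
by apply: (tail_eq_restr_sub fy fx xk hk' hk (tail_eq_sym A)); rewrite hnu hk hk'.
Qed.

Lemma tail_eq_sub l l' x x' y : is_filter x -> is_filter x' ->
  tail_eq l l' x y -> tail_eq l l' x' y -> x `<=` x'.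
Proof.
move=> fx fx' [h1 h2 hs H] [h1' h2' hs' H'] mu xmu.
have [r [xr pm [nu [hnu E]]]] := filter_directed fx xmu h1; subst r.
apply: (filter_downward fx' _ pm).
by apply/(H' _ (esym hnu)); apply/(H _ (esym hnu)).
Qed.

Lemma tail_eq_uniq l l' x x' y : is_filter x -> is_filter x' ->
  tail_eq l l' x y -> tail_eq l l' x' y -> x = x'.
Proof.
move=> fx fx' A A'; apply/seteqP.
by split; [exact: (tail_eq_sub fx fx' A A') | exact: (tail_eq_sub fx' fx A' A)].
Qed.

Lemma tail_eq_refine j j' k k' x z : is_filter x -> is_filter z ->
  tail_eq j j' x z -> tail_eq k k' x z ->
  d j * (d j')^-1 = d k * (d k')^-1 ->
  exists la la', [/\ tail_eq la la' x z, prec j la, prec j' la' &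
    forall x' z', is_filter x' -> is_filter z' -> x' la -> z' la' ->
      tail_eq j j' x' z' -> tail_eq k k' x' z'].
Proof.
move=> fx fz Aj Ak hd.
have [xj _ hsj _] := Aj; have [xk _ hsk _] := Ak.
have [la [xla [al [hal Ea]] [ga [hga Eg]]]] := filter_directed fx xj xk.
have Aa : tail_eq la (comp j' al) x z by rewrite Ea; apply: tail_eq_ext; rewrite -?Ea.
have Ag : tail_eq la (comp k' ga) x z by rewrite Eg; apply: tail_eq_ext; rewrite -?Eg.
have e : comp j' al = comp k' ga.
  apply: (filter_deg_uniq fz); [by case: Aa | by case: Ag |].
  have dla : d j * d al = d k * d ga by rewrite -!deg_comp // -Ea -Eg.
  rewrite !deg_comp -?hsj -?hsk //.
  have -> : d j' * d al = (d j / d j')^-1 * (d j * d al).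
    by rewrite invgF -mulgA mulKg.
  by rewrite hd dla invgF -mulgA mulKg.
exists la, (comp j' al); split => //.
- by rewrite Ea; apply: prec_comp.
- by apply: prec_comp; rewrite -hsj.
move=> x' z' fx' fz' x'la z'la' Aj'.
have A1 : tail_eq la (comp j' al) x' z' by rewrite Ea; apply: tail_eq_ext; rewrite -?Ea.
rewrite e Eg in A1; apply: (tail_eq_restr fx' fz' _ _ hga) A1.
- by apply: (filter_downward fx' x'la); rewrite Eg; apply: prec_comp.
- by apply: (filter_downward fz' z'la'); rewrite e; apply: prec_comp; rewrite -hsk.
- by rewrite -hsk.
Qed.

(* [w] with its initial segment [a] replaced by [b]. *)
Definition regraft a b w :=
  [set mu | exists nu, [/\ rng nu = src a, w (comp a nu) & prec mu (comp b nu)]].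

Lemma regraft_filter a b w : is_filter w -> w a -> src a = src b ->
  is_filter (regraft a b w).
Proof.
move=> fw wa hab; split.
- exists b, (idm (src a)); rewrite rng_idm comp_idr hab comp_idr.
  by split => //; apply: prec_refl.
- by move=> m l pml [nu [h1 h2 h3]]; exists nu; split => //; apply: prec_trans h3.
move=> l1 l2 [n1 [h1 w1 p1]] [n2 [h2 w2 p2]].
have [r [wr [b1 [hb1 E1]] [b2 [hb2 E2]]]] := filter_directed fw w1 w2.
rewrite src_comp // in hb1; rewrite src_comp // in hb2.
rewrite -comp_assoc // in E1; rewrite -comp_assoc // in E2.
have e : comp n1 b1 = comp n2 b2.
  by apply: (@compI a); rewrite ?rng_comp // -?E1 // -E2.
exists (comp b (comp n1 b1)); split.
- by exists (comp n1 b1); split; [rewrite rng_comp | rewrite -E1 | apply: prec_refl].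
- apply: (prec_trans p1); rewrite comp_assoc -?hab //.
  by apply: prec_comp; rewrite src_comp // -hab.
- rewrite e; apply: (prec_trans p2); rewrite comp_assoc -?hab //.
  by apply: prec_comp; rewrite src_comp // -hab.
Qed.

Lemma regraft_tail_eq a b w : is_filter w -> w a -> src a = src b ->
  tail_eq b a (regraft a b w) w.
Proof.
move=> fw wa hab; split; [ | done | by rewrite hab | ].
  exists (idm (src a)); rewrite rng_idm comp_idr hab comp_idr.
  by split => //; apply: prec_refl.
move=> nu hnu; have hnu' := esym hnu; split.
  move=> [nu1 [h1 h2 [be [hbe E]]]].
  rewrite src_comp // in hbe; rewrite -comp_assoc // in E.
  have e : nu1 = comp nu be.
    by apply: (@compI b) => //; [rewrite -hab h1 | rewrite rng_comp].
  have hanu : src a = rng nu by rewrite hab.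
  subst nu1; apply: (filter_downward fw h2); rewrite comp_assoc //.
  by apply: prec_comp; rewrite src_comp.
by move=> h; exists nu; split => //; [rewrite hnu hab | apply: prec_refl].
Qed.

Lemma tail_eq_regraft a b x w : is_filter x -> is_filter w ->
  tail_eq b a x w -> x = regraft a b w.
Proof.
move=> fx fw A; have [_ wa hs _] := A.
apply: (tail_eq_uniq fx (regraft_filter fw wa (esym hs)) A).
exact: regraft_tail_eq.
Qed.

Lemma regraft_finite_dep a b mu : FA b -> src a = src b ->
  exists S, finite_set S /\
    forall w, is_filter w -> (regraft a b w mu <-> S `&` w !=set0).
Proof.
move=> Fb hs.
have [J [fJ EJ]] := Fb b mu (prec_refl b).
have JE j : J j -> (ext b `&` ext mu) j.
  by move=> Jj; rewrite EJ; exists j => //; apply: prec_refl.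
have H j : exists nu, J j -> src b = rng nu /\ j = comp b nu.
  have [/JE [[nu [h1 h2]] _]|nJ] := pselect (J j); first by exists nu.
  by exists j.
have [f Hf] := boolp.choice H.
exists ((fun j => comp a (f j)) @` J); split; first exact: finite_image.
move=> w fw; split.
  move=> [nu [h1 h2 h3]].
  have hl : src b = rng nu by rewrite h1 hs.
  have : (ext b `&` ext mu) (comp b nu) by split; [apply: prec_comp | exact: h3].
  rewrite EJ => -[j Jj [be [hbe Eb]]].
  have [hf1 hf2] := Hf j Jj.
  rewrite hf2 src_comp // in hbe; rewrite hf2 -comp_assoc // in Eb.
  have e : nu = comp (f j) be by apply: (compI hl) => //; rewrite rng_comp.
  exists (comp a (f j)); split; first by exists j.
  apply: (filter_downward fw h2); rewrite e comp_assoc ?hs //.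
  by apply: prec_comp; rewrite src_comp // hs.
move=> [e [[j Jj <-] we]]; have [hf1 hf2] := Hf j Jj.
exists (f j); split => //; first by rewrite -hf1 hs.
by rewrite -hf2; case: (JE j Jj).
Qed.

(* Continuity of [regraft a b] at [y]. *)
Lemma regraft_cyl a b F G y : FA b -> src a = src b -> is_filter y ->
  cyl F G (regraft a b y) -> exists F1 G1, [/\ finite_set F -> finite_set F1,
    finite_set G -> finite_set G1, cyl F1 G1 y &
    forall y', is_filter y' -> cyl F1 G1 y' -> cyl F G (regraft a b y')].
Proof.
move=> Fb hs fy /cylP [cF cG].
have [S HS] := boolp.choice (fun mu => regraft_finite_dep mu Fb hs).
have H mu : exists e, F mu -> (S mu `&` y) e.
  have [Fm|nF] := pselect (F mu); last by exists mu.
  by have [e he] := iffLR ((HS mu).2 y fy) (cF _ Fm); exists e.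
have [ef Hef] := boolp.choice H.
exists (ef @` F), (\bigcup_(mu in G) S mu); split.
- exact: finite_image.
- by move=> fG; apply: bigcup_finite => // mu _; case: (HS mu).
- apply/cylP; split; first by move=> _ [mu Fm <-]; case: (Hef mu Fm).
  move=> e [mu Gm Se] ye; apply: (cG mu Gm); apply/((HS mu).2 y fy); by exists e.
move=> y' fy' /cylP [cF1 cG1]; apply/cylP; split.
  move=> mu Fm; apply/((HS mu).2 y' fy'); exists (ef mu).
  by split; [case: (Hef mu Fm) | apply: cF1; exists mu].
move=> mu Gm /((HS mu).2 y' fy') [e [Se ye]]; apply: (cG1 e) => //; by exists mu.
Qed.

Lemma regraft_maximal a b y : maximal_filter y -> y a -> src a = src b ->
  maximal_filter (regraft a b y).
Proof.
move=> [fy my] ya hs.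
have fT := regraft_filter fy ya hs.
have [Tb _ hs2 HA] := regraft_tail_eq fy ya hs.
split => // w fw sub.
have wb := sub _ Tb.
have sy : y `<=` regraft b a w.
  move=> mu ymu; have [r [yr pmr [nu [hnu E]]]] := filter_directed fy ymu ya.
  have hnu' : rng nu = src b by rewrite -hnu hs.
  by subst r; exists nu; split => //; apply: sub; apply/HA.
have e3 := my _ (regraft_filter fw wb (esym hs)) sy.
apply/seteqP; split => // mu wmu.
have [r [wr pmr [nu [hnu E]]]] := filter_directed fw wmu wb; subst r.
apply: (filter_downward fT _ pmr); apply/(HA nu (esym hnu)).
rewrite -e3; exists nu; split; [by rewrite hnu | done | exact: prec_refl].
Qed.

End PGraphFilters.

(** * The path space *)

Section PathSpaceTopology.
Variable C : category.
Local Notation Lam := (mor C).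
Local Notation X := (@path_space C).
Local Notation PO := (@path_opens C).
Implicit Types (a b c k l m n mu : Lam) (x y p F G : set Lam) (U V : set (set Lam)).

Lemma path_openP U : PO U <->
  (U `<=` X /\ forall x, U x -> exists F G, [/\ finite_set F, finite_set G, cyl F G x &
      cyl F G `&` X `<=` U]).
Proof.
split.
  move=> [U0 [pU0 ->]]; split; first by move=> x [].
  move=> x [U0x Xx]; have [F [G [fF fG cx sub]]] := pU0 x U0x.
  by exists F, G; split => //; apply: setSI.
move=> [UX H]; exists [set z | exists F G,
  [/\ finite_set F, finite_set G, cyl F G z & cyl F G `&` X `<=` U]]; split.
  move=> z [F [G [fF fG cz sub]]]; exists F, G; split => // z' cz'.
  by exists F, G.
apply/seteqP; split; first by move=> x Ux; split; [apply: H | apply: UX].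
by move=> x [[F [G [fF fG cx sub]]] Xx]; apply: sub.
Qed.

Lemma path_open_cyl F G : finite_set F -> finite_set G -> PO (cyl F G `&` X).
Proof. by move=> fF fG; exists (cyl F G); split => // x cx; exists F, G; split. Qed.

Lemma path_openI U V : PO U -> PO V -> PO (U `&` V).
Proof.
move=> /path_openP [UX HU] /path_openP [VX HV]; apply/path_openP.
split; first by move=> x [/UX].
move=> x [Ux Vx].
have [F1 [G1 [f1 g1 c1 s1]]] := HU x Ux.
have [F2 [G2 [f2 g2 c2 s2]]] := HV x Vx.
exists (F1 `|` F2), (G1 `|` G2); rewrite !finite_setU cylU; split => //.
by move=> y [[cy1 cy2] Xy]; split; [apply: s1 | apply: s2].
Qed.

Lemma path_openT : PO X.
Proof.
exists setT; rewrite setTI; split => // x _.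
exists set0, set0; split; [exact: finite_set0 | exact: finite_set0 | |].
  by apply/cylP; split.
by move=> y [].
Qed.

Lemma path_space_hausdorff : is_hausdorff X PO.
Proof.
have sep x y a : X x -> X y -> x a -> ~ y a -> exists U V,
    [/\ PO U, PO V, U x, V y & U `&` V = set0].
  move=> Xx Xy xa nya; exists (cyl [set a] set0 `&` X), (cyl set0 [set a] `&` X).
  split; try apply: path_open_cyl; try exact: finite_set1; try exact: finite_set0.
  - by split => //; apply/cylP; split => // ? ->.
  - by split => //; apply/cylP; split => // ? ->.
  apply/seteqP; split => // z [[/cylP [h1 _] _] [/cylP [_ h2] _]].
  by apply: (h2 a) => //; apply: h1.
move=> x y Xx Xy nxy.
have [a xy] : exists a, ~ (x a <-> y a).
  by apply/existsNP => H; apply: nxy; apply/seteqP; split => a; move/(H a).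
have [xa|nxa] := pselect (x a).
  by apply: (sep x y a) => // ya; apply: xy.
have ya : y a by apply: contrapT => nya; apply: xy; split => [/nxa []|/nya []].
have [U [V [OU OV Uy Vx dis]]] := sep y x a Xy Xx ya nxa.
by exists V, U; rewrite setIC.
Qed.

Definition Zcyl a : set (set Lam) := cyl [set a] set0 `&` X.

Lemma ZcylP a x : Zcyl a x <-> x a /\ X x.
Proof.
split; first by move=> [/cylP [h _] Xx]; split => //; apply: h.
by move=> [xa Xx]; split => //; apply/cylP; split => // ? ->.
Qed.

Lemma path_open_Zcyl a : PO (Zcyl a).
Proof. by apply: path_open_cyl; [exact: finite_set1 | exact: finite_set0]. Qed.

Lemma path_spaceP a x : FA a -> is_filter x -> x a -> X x.
Proof. by move=> Fa fx xa; split => //; exists a. Qed.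

Lemma path_open_nbhd U : U `<=` X ->
  (forall x, U x -> exists2 V, PO V & V x /\ V `<=` U) -> PO U.
Proof.
move=> UX H; apply/path_openP; split => // x Ux.
have [V /path_openP [_ HV] [Vx VU]] := H x Ux.
have [F [F' [fF fF' cx sub]]] := HV x Vx.
by exists F, F'; split => //; apply: subset_trans VU.
Qed.

End PathSpaceTopology.

(** * Compactness of cylinders *)

Lemma finite_bounded_image T (f : T -> nat) (S : set T) : finite_set S ->
  exists k, forall a, S a -> (f a < k)%N.
Proof.
move=> /(finite_image f) /finite_seqP [s E]; exists (\max_(i <- s) i).+1 => a Sa.
have : (f @` S) (f a) by exists a.
by rewrite E ltnS => fas; apply: (leq_bigmax_seq (f a)) fas _.
Qed.

Section PowerSetCompactness.
Variables (C : category) (idx : mor C -> nat).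
Hypothesis idxI : injective idx.
Variables (K : set (set (mor C))) (Cv : set (set (set (mor C)))).
Local Notation Lam := (mor C).
Implicit Types (a : Lam) (y : set Lam).

Definition agree_below k (D : set Lam) y := forall a, (idx a < k)%N -> (y a <-> D a).

Definition finitely_covered (E : set (set Lam)) :=
  exists D, [/\ finite_set D, D `<=` Cv & E `<=` \bigcup_(U in D) U].

(* Decide the coordinates [a] one at a time, in the order of [idx], keeping
   the part of [K] compatible with the decisions made so far not finitely
   covered. *)
Fixpoint approx k : set Lam :=
  if k is k'.+1 then
    let D := approx k' `|` [set a | idx a = k'] in
    if `[< ~ finitely_covered (K `&` agree_below k'.+1 D) >] then D else approx k'
  else set0.

Definition approx_limit : set Lam := [set a | approx (idx a).+1 a].

Lemma approx_lt k a : approx k a -> (idx a < k)%N.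
Proof.
elim: k => [//|k IH] /=; case: asboolP => _; last by move/IH/ltnW.
by move=> [/IH/ltnW //|/= ->].
Qed.

Lemma approx_stable k a : (idx a < k)%N -> (approx k a <-> approx_limit a).
Proof.
elim: k => [//|k IH]; rewrite ltnS leq_eqVlt => /orP [/eqP <- //|lt].
rewrite -(IH lt) /=; case: asboolP => _ //; split; last by left.
by move=> [//|e]; rewrite e ltnn in lt.
Qed.

Lemma approx_not_covered k : ~ finitely_covered K ->
  ~ finitely_covered (K `&` agree_below k (approx k)).
Proof.
move=> nK; elim: k => [|k IH].
  by move=> [D [fD sD cD]]; apply: nK; exists D; split => // y Ky; apply: cD.
rewrite /=; case: asboolP => [//|/contrapT [D1 [f1 s1 c1]] [D2 [f2 s2 c2]]].
apply: IH; exists (D1 `|` D2); rewrite finite_setU; split => //.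
  by move=> U [/s1|/s2].
move=> y [Ky ay].
have [[a0 [ia0 ya0]]|no] := pselect (exists a, idx a = k /\ y a).
  have [U DU Uy] : (\bigcup_(U in D1) U) y.
    apply: c1; split => // a; rewrite ltnS leq_eqVlt => /orP [/eqP ia|lt].
      have -> : a = a0 by apply: idxI; rewrite ia ia0.
      by split => // _; right.
    rewrite (ay a lt); split; first by left.
    by move=> [//|e]; rewrite e ltnn in lt.
  by exists U => //; left.
have [U DU Uy] : (\bigcup_(U in D2) U) y.
  apply: c2; split => // a; rewrite ltnS leq_eqVlt => /orP [/eqP ia|lt]; last exact: ay.
  split; first by move=> ya; case: no; exists a.
  by move/approx_lt; rewrite ia ltnn.
by exists U => //; right.
Qed.

End PowerSetCompactness.

Section PowerSetClosure.
Variable C : category.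
Local Notation Lam := (mor C).
Local Notation X := (@path_space C).
Local Notation PO := (@path_opens C).
Implicit Types (a k l m : Lam) (y p F G : set Lam) (K : set (set Lam)).

Definition pow_closure K p :=
  forall S, finite_set S -> exists2 y, K y & forall a, S a -> (y a <-> p a).

Lemma pow_closure_compact K : countable [set: Lam] ->
  (forall p, pow_closure K p -> K p) -> is_compact setT (@pow_open C) K.
Proof.
move=> /countable_injP [idx idxI] Kcl; split => // Cv CvO Kcov.
have {}idxI : injective idx by move=> a b /idxI; apply; exact: in_setT.
apply: contrapT => nK.
have approx_ne n : exists2 y, K y & agree_below idx n (approx idx K Cv n) y.
  apply: contrapT => nn; apply: (approx_not_covered idxI (k := n) nK).
  by exists set0; split => // y [Ky ay]; case: nn; exists y.
have agree_limit n y : agree_below idx n (approx idx K Cv n) y ->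
    forall a, (idx a < n)%N -> (y a <-> approx_limit idx K Cv a).
  by move=> ay a lt; rewrite (ay a lt); apply: approx_stable.
have [U CvU Up] : (\bigcup_(U in Cv) U) (approx_limit idx K Cv).
  apply: Kcov; apply: Kcl => S /(finite_bounded_image idx) [n hn].
  have [y Ky ay] := approx_ne n; exists y => // a Sa.
  exact: agree_limit ay a (hn a Sa).
have [F [G [fF fG /cylP [cF cG] sub]]] := CvO U CvU _ Up.
have fFG : finite_set (F `|` G) by rewrite finite_setU.
have [n hn] := finite_bounded_image idx fFG.
apply: (approx_not_covered idxI (k := n) nK); exists [set U]; split.
- exact: finite_set1.
- by move=> ? ->.
move=> y [Ky ay]; exists U => //; apply: sub; apply/cylP; split.
  by move=> a Fa; apply/(agree_limit n y ay a (hn a (or_introl Fa))); apply: cF.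
by move=> a Ga /(agree_limit n y ay a (hn a (or_intror Ga))); apply: cG.
Qed.

Lemma pow_closure_cyl K F G p : K `<=` cyl F G -> pow_closure K p -> cyl F G p.
Proof.
move=> KFG pK; apply/cylP; split => [a Fa|a Ga pa].
  have [y /KFG /cylP [cF _] /(_ a erefl) <-] := pK _ (finite_set1 a).
  exact: cF.
have [y /KFG /cylP [_ cG] /(_ a erefl) ya] := pK _ (finite_set1 a).
by apply: (cG a Ga); apply/ya.
Qed.

Lemma pow_closure_filter K p k : K `<=` @is_filter C -> FA k -> p k ->
  pow_closure K p -> is_filter p.
Proof.
move=> Kf Fk pk pK.
have agree S : finite_set S -> exists2 y, is_filter y & forall a, S a -> (y a <-> p a).
  by move=> /pK [y /Kf fy ay]; exists y.
have pdown m l : prec m l -> p l -> p m.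
  move=> ml pl; have [y fy ay] := agree _ (finite_set2 m l).
  apply/(ay m (or_introl erefl)); apply: filter_downward fy _ ml.
  exact/(ay l (or_intror erefl)).
have pup c m : p c -> prec k c -> p m -> exists c', [/\ p c', prec c c' & prec m c'].
  move=> pc kc pm; have [J [fJ EJ]] := Fk c m kc.
  have fJcm : finite_set (J `|` [set c; m]).
    by rewrite finite_setU; split => //; apply: finite_set2.
  have [y fy ay] := agree _ fJcm.
  have yc : y c := (ay c (or_intror (or_introl erefl))).2 pc.
  have ym : y m := (ay m (or_intror (or_intror erefl))).2 pm.
  have [r [yr cr mr]] := filter_directed fy yc ym.
  have := conj cr mr; rewrite -[_ /\ _]/((ext c `&` ext m) r) EJ => -[j Jj jr].
  have : (ext c `&` ext m) j by rewrite EJ; exists j => //; apply: prec_refl.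
  move=> [cj mj]; exists j; split => //.
  by apply/(ay j (or_introl Jj)); apply: filter_downward fy yr jr.
split; [by exists k | exact: pdown |].
move=> l m pl pm.
have [c1 [pc1 kc1 lc1]] := pup k l pk (prec_refl k) pl.
have [c2 [pc2 c12 mc2]] := pup c1 m pc1 kc1 pm.
by exists c2; split => //; apply: prec_trans lc1 c12.
Qed.

Lemma cyl_compact k F G : countable [set: Lam] -> FA k -> F k ->
  is_compact X PO (cyl F G `&` X).
Proof.
move=> cnt Fk Fk'; apply: compact_subspace; first exact: subIsetr.
apply: pow_closure_compact => // p pK.
have pFG : cyl F G p by apply: pow_closure_cyl pK; apply: subIsetl.
have pk : p k by case/cylP: pFG => sFp _; apply: sFp.
have fp : is_filter p by apply: (pow_closure_filter _ Fk pk pK) => y [_ []].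
by split => //; split => //; exists k.
Qed.

Lemma path_space_compact_open_basis : countable [set: Lam] -> compact_open_basis X PO.
Proof.
move=> cnt U x /path_openP [UX HU] Ux.
have [F [F' [fF fF' /cylP [cF cF'] sub]]] := HU x Ux.
have [_ [k [xk Fk]]] := UX x Ux.
exists (cyl (F `|` [set k]) F' `&` X); split.
- by apply: path_open_cyl => //; rewrite finite_setU; split => //; apply: finite_set1.
- by apply: (cyl_compact _ cnt Fk); right.
- by split; [apply/cylP; split => // a [/cF|->] | apply: UX].
move=> y [/cylP [cy cy'] Xy]; apply: sub; split => //.
by apply/cylP; split => // a Fa; apply: cy; left.
Qed.

Lemma path_space_locally_compact : countable [set: Lam] -> locally_compact X PO.
Proof.
move=> cnt; apply: compact_open_basis_locally_compact; first exact: path_openT.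
exact: path_space_compact_open_basis.
Qed.

End PowerSetClosure.

(** * The path groupoid *)

Section PathGroupoidTopology.
Variables (Q : groupType) (P : set Q) (C : category) (d : mor C -> Q).
Hypothesis HG : is_Pgraph P d.
Local Notation Lam := (mor C).
Local Notation arrow := (set Lam * Q * set Lam)%type.
Local Notation X := (@path_space C).
Local Notation PO := (@path_opens C).
Local Notation G := (path_groupoid P d).
Local Notation OG := (groupoid_opens P d).
Local Notation gb := (gbasic P d).
Implicit Types (a b c k l la sg : Lam) (x y : set Lam) (U V : set (set Lam)).
Implicit Types (p q r : Q) (g h : arrow) (W : set arrow).

Lemma path_groupoid_tail g : G g -> [/\ X g.1.1, X g.2 &
  exists l l', tail_eq l l' g.1.1 g.2 /\ g.1.2 = d l * (d l')^-1].
Proof.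
case: g => [[x q] y] [/= Xx Xy [m [n [_ -> [l [xl <-]] [l' [yl <-]] sh]]]].
split => //; exists l, l'; split => //.
by apply/(shift_eq_tail HG (proj1 Xx) (proj1 Xy) xl yl).
Qed.

Lemma gbasic_tail p q U V g : gb p q U V g -> [/\ X g.1.1, X g.2, U g.1.1, V g.2 &
  g.1.2 = p * q^-1 /\ exists l l', [/\ d l = p, d l' = q & tail_eq l l' g.1.1 g.2]].
Proof.
move=> [[Xx Xy _] e Ux Vy [[l [xl dl]] [l' [yl dl']] sh]].
split => //; split => //; exists l, l'; split => //.
by subst p q; apply/(shift_eq_tail HG (proj1 Xx) (proj1 Xy) xl yl).
Qed.

Lemma tail_gbasic U V g l l' : X g.1.1 -> X g.2 -> U g.1.1 -> V g.2 ->
  tail_eq l l' g.1.1 g.2 -> g.1.2 = d l * (d l')^-1 -> gb (d l) (d l') U V g.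
Proof.
move=> Xx Xy Ux Vy A e; have [xl yl _ _] := A.
have sh : shift d (d l) g.1.1 = shift d (d l') g.2.
  exact/(shift_eq_tail HG (proj1 Xx) (proj1 Xy) xl yl).
have xdom : pdom d (d l) g.1.1 by exists l.
have ydom : pdom d (d l') g.2 by exists l'.
have Gg : G g.
  by split => //; exists (d l), (d l'); split => //; split; exact: (degP HG).
by split.
Qed.

Lemma gbasic_ends p q U V U' V' g : gb p q U V g -> U' g.1.1 -> V' g.2 ->
  gb p q U' V' g.
Proof. by move=> [? ? _ _ ?] ? ?; split. Qed.

Lemma gbasicS p q U V U' V' : U `<=` U' -> V `<=` V' -> gb p q U V `<=` gb p q U' V'.
Proof. by move=> sU sV g [? ? /sU ? /sV ? ?]; split. Qed.

Lemma path_groupoid_gbasic g U V : G g -> U g.1.1 -> V g.2 ->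
  exists p q, gb p q U V g.
Proof.
move=> Gg Ux Vy; have [Xx Xy [l [l' [A e]]]] := path_groupoid_tail Gg.
by exists (d l), (d l'); apply: tail_gbasic.
Qed.

Lemma gbasic_open p q U V : PO U -> PO V -> OG (gb p q U V).
Proof.
move=> pU pV; split; first by move=> g [].
move=> g gg; exists p, q, U, V; split => //.
have [_ _ _ _ [_ [l [l' [<- <- _]]]]] := gbasic_tail gg.
by split; exact: (degP HG).
Qed.

Lemma groupoid_openP W g : OG W -> W g -> exists p q U V,
  [/\ PO U, PO V, gb p q U V g & gb p q U V `<=` W].
Proof.
by move=> [_ H] /H [p [q [U [V [_ pU pV gg sub]]]]]; exists p, q, U, V.
Qed.

Lemma groupoid_open_ends U V : PO U -> PO V ->
  OG [set g | [/\ G g, U g.1.1 & V g.2]].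
Proof.
move=> pU pV; split; first by move=> g [].
move=> g [Gg Ux Vy]; have [p [q gg]] := path_groupoid_gbasic Gg Ux Vy.
exists p, q, U, V; split => //; last by move=> k [? ? ? ? ?]; split.
have [_ _ _ _ [_ [l [l' [<- <- _]]]]] := gbasic_tail gg.
by split; exact: (degP HG).
Qed.

Lemma gbasic_disjoint p q p' q' U V U' V' :
  [\/ U `&` U' = set0, V `&` V' = set0 | p * q^-1 <> p' * q'^-1] ->
  gb p q U V `&` gb p' q' U' V' = set0.
Proof.
move=> H; apply/seteqP; split => // g [[_ e Ux Vy _] [_ e' Ux' Vy' _]].
case: H => [dis|dis|ne]; last by case: ne; rewrite -e -e'.
- by have : (U `&` U') g.1.1 by []; rewrite dis.
- by have : (V `&` V') g.2 by []; rewrite dis.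
Qed.

Lemma path_groupoid_hausdorff : is_hausdorff G OG.
Proof.
move=> g h Gg Gh ngh.
have [Xx Xy _] := path_groupoid_tail Gg; have [Xx' Xy' _] := path_groupoid_tail Gh.
suff [U [V [U' [V' [[pU pV Ux Vy] [pU' pV' Ux' Vy'] sep]]]]] :
    exists U V U' V', [/\ [/\ PO U, PO V, U g.1.1 & V g.2],
      [/\ PO U', PO V', U' h.1.1 & V' h.2] &
      [\/ U `&` U' = set0, V `&` V' = set0 | g.1.2 <> h.1.2]].
  have [p [q gg]] := path_groupoid_gbasic Gg Ux Vy.
  have [p' [q' hh]] := path_groupoid_gbasic Gh Ux' Vy'.
  exists (gb p q U V), (gb p' q' U' V'); split => //; try exact: gbasic_open.
  apply: gbasic_disjoint; case: sep => [dis|dis|ne]; [exact: Or31 | exact: Or32 | apply: Or33].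
  by have [_ _ _ _ [<- _]] := gbasic_tail gg; have [_ _ _ _ [<- _]] := gbasic_tail hh.
have [ex|nex] := pselect (g.1.1 = h.1.1); last first.
  have [U [U' [pU pU' Ux Ux' dis]]] := path_space_hausdorff Xx Xx' nex.
  by exists U, X, U', X; split; [split => //; apply: path_openT ..| exact: Or31].
have [ey|ney] := pselect (g.2 = h.2); last first.
  have [V [V' [pV pV' Vy Vy' dis]]] := path_space_hausdorff Xy Xy' ney.
  by exists X, V, X, V'; split; [split => //; apply: path_openT ..| exact: Or32].
exists X, X, X, X; split; [split => //; apply: path_openT ..|].
apply: Or33 => eq_q; apply: ngh.
move: ex ey eq_q; case: g {Gg Xx Xy} => [[? ?] ?].
by case: h {Gh Xx' Xy'} => [[? ?] ?] /= -> -> ->.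
Qed.

Lemma ginvK g : ginv (ginv g) = g.
Proof. by case: g => [[x q] y]; rewrite /ginv /= invgK. Qed.

Lemma gbasic_ginv p q U V g : gb p q U V g -> gb q p V U (ginv g).
Proof.
move=> /gbasic_tail [Xx Xy Ux Vy [e [l [l' [dl dl' A]]]]]; rewrite -dl -dl' in e *.
by apply: (tail_gbasic (l := l') (l' := l)) => //=; [apply: tail_eq_sym | rewrite e invgF].
Qed.

Lemma path_groupoid_ginv g : G g -> G (ginv g).
Proof.
move=> Gg; have [p [q gg]] := path_groupoid_gbasic (U := setT) (V := setT) Gg I I.
by case: (gbasic_ginv gg).
Qed.

Lemma ginv_continuous : continuous_on G OG G OG (@ginv Q C).
Proof.
split => [|W OW]; first exact: path_groupoid_ginv.
split; first by move=> g [].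
move=> g [Gg Wig]; have [p [q [U [V [pU pV gg sub]]]]] := groupoid_openP OW Wig.
have [_ _ _ _ [_ [l [l' [dl dl' _]]]]] := gbasic_tail gg.
exists q, p, V, U; split => //.
- by rewrite -dl -dl'; split; exact: (degP HG).
- by rewrite -(ginvK g); apply: gbasic_ginv.
move=> k kk; split; first by case: kk.
by apply: sub; apply: gbasic_ginv.
Qed.

Lemma gbasic_gmul p q r U V U' V' g h : gb p q U V g -> gb q r U' V' h ->
  gsrc g = grng h -> gb p r U V' (gmul g h).
Proof.
move=> [[Xx _ _] e Ux _ [xp yq sh]] [[_ Xz _] e' _ Vz [_ zr sh']] gh.
rewrite /gsrc /grng in gh; rewrite -gh in sh'.
have qgh : (gmul g h).1.2 = p * r^-1 by rewrite /= e e' -mulgA mulKg.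
have Pp : P p /\ P r.
  by case: xp => l [_ <-]; case: zr => l' [_ <-]; split; exact: (degP HG).
have dom : [/\ pdom d p (gmul g h).1.1, pdom d r (gmul g h).2 &
    shift d p (gmul g h).1.1 = shift d r (gmul g h).2] by split => //=; rewrite sh.
by split => //; split => //=; exists p, r; case: dom.
Qed.

Lemma composable_gbasic g h : G g -> G h -> gsrc g = grng h ->
  exists p q r, gb p q X X g /\ gb q r X X h.
Proof.
move=> Gg Gh gh; rewrite /gsrc /grng in gh.
have [Xx Xy [l1 [l1' [A1 e1]]]] := path_groupoid_tail Gg.
have [_ Xz [l2 [l2' [A2 e2]]]] := path_groupoid_tail Gh.
rewrite -gh in A2; have [_ y1 hs1 _] := A1; have [y2 _ hs2 _] := A2.
have [rho [yr [al [hal Ea]] [be [hbe Eb]]]] := filter_directed (proj1 Xy) y1 y2.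
have B1 : tail_eq (comp l1 al) rho g.1.1 g.2.
  by rewrite Ea; apply: tail_eq_ext_r; rewrite -?Ea.
have B2 : tail_eq rho (comp l2' be) h.1.1 h.2.
  by rewrite -gh Eb; apply: tail_eq_ext; rewrite -?Eb.
have hl1 : src l1 = rng al by rewrite hs1.
have hl2 : src l2' = rng be by rewrite -hs2.
exists (d (comp l1 al)), (d rho), (d (comp l2' be)); split.
  apply: (tail_gbasic (l := comp l1 al) (l' := rho)) => //.
  by rewrite e1 Ea !(deg_comp HG) // mulgKA.
have Xh : X h.1.1 by rewrite -gh.
apply: (tail_gbasic (l := rho) (l' := comp l2' be)) => //.
by rewrite e2 Eb !(deg_comp HG) // mulgKA.
Qed.

Lemma gbasic_refine p q p' q' U V g : gb p q U V g -> gb p' q' U V g ->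
  exists la la', [/\ g.1.1 la, g.2 la' &
    gb p q (Zcyl la `&` U) (Zcyl la' `&` V) `<=` gb p' q' U V].
Proof.
move=> /gbasic_tail [Xx Xy _ _ [e [j [j' [dj dj' Aj]]]]].
move=> /gbasic_tail [_ _ _ _ [e' [k [k' [dk dk' Ak]]]]].
have hd : d j * (d j')^-1 = d k * (d k')^-1 by rewrite dj dj' dk dk' -e -e'.
have [la [la' [Ala jla jla' Href]]] := tail_eq_refine HG (proj1 Xx) (proj1 Xy) Aj Ak hd.
have [xla yla' _ _] := Ala; exists la, la'; split => // g' gg'.
have [Xx' Xy' [/ZcylP [x'la _] Ux'] [/ZcylP [y'la' _] Vy'] [e2 [i [i' [di di' Ai]]]]] :=
  gbasic_tail gg'.
have [x'i y'i' _ _] := Ai.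
have fx' := proj1 Xx'; have fy' := proj1 Xy'.
have ej : i = j.
  by apply: (filter_deg_uniq HG fx' x'i (filter_downward fx' x'la jla)); rewrite di.
have ej' : i' = j'.
  by apply: (filter_deg_uniq HG fy' y'i' (filter_downward fy' y'la' jla')); rewrite di'.
rewrite ej ej' in Ai; rewrite -dk -dk'.
apply: (tail_gbasic (l := k) (l' := k')) => //; first exact: Href.
by rewrite e2 -dj -dj' hd.
Qed.

Lemma gmul_continuous g h : G g -> G h -> gsrc g = grng h ->
  forall W, OG W -> W (gmul g h) ->
  exists W1 W2, [/\ OG W1, OG W2, W1 g, W2 h &
    forall g' h', W1 g' -> W2 h' -> G g' -> G h' -> gsrc g' = grng h' -> W (gmul g' h')].
Proof.
move=> Gg Gh gh W OW Wgh.
have [p' [q' [U0 [V0 [pU0 pV0 ghW subW]]]]] := groupoid_openP OW Wgh.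
have [p [q [r [gg hh]]]] := composable_gbasic Gg Gh gh.
have [_ _ U0x V0z _] := gbasic_tail ghW.
have gh0 : gb p r U0 V0 (gmul g h) := gbasic_ends (gbasic_gmul gg hh gh) U0x V0z.
have [la [la' [xla zla' sub]]] := gbasic_refine gh0 ghW.
have [Xx Xy _ _ _] := gbasic_tail gg; have [Xh Xz _ _ _] := gbasic_tail hh.
exists (gb p q (Zcyl la `&` U0) X), (gb q r X (Zcyl la' `&` V0)); split.
- apply: gbasic_open; last exact: path_openT.
  by apply: path_openI => //; apply: path_open_Zcyl.
- apply: gbasic_open; first exact: path_openT.
  by apply: path_openI => //; apply: path_open_Zcyl.
- by apply: (gbasic_ends gg) => //; split => //; apply/ZcylP.
- by apply: (gbasic_ends hh) => //; split => //; apply/ZcylP.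
by move=> g' h' gg' hh' _ _ gh'; apply/subW/sub; apply: gbasic_gmul gg' hh' gh'.
Qed.

Lemma path_groupoid_topological :
  topological_groupoid G OG (@gsrc Q C) (@grng Q C) (@gmul Q C) (@ginv Q C).
Proof. by split; [exact: ginv_continuous | exact: gmul_continuous]. Qed.

Definition bisection la sg := gb (d la) (d sg) (Zcyl la) (Zcyl sg).

Lemma bisection_tail la sg g : bisection la sg g ->
  [/\ X g.1.1, X g.2, g.1.2 = d la * (d sg)^-1 & tail_eq la sg g.1.1 g.2].
Proof.
move=> /gbasic_tail [Xx Xy /ZcylP [xla _] /ZcylP [ysg _] [e [l [l' [dl dl' A]]]]].
have [x_l y_l' _ _] := A.
have el : l = la := filter_deg_uniq HG (proj1 Xx) x_l xla dl.
have el' : l' = sg := filter_deg_uniq HG (proj1 Xy) y_l' ysg dl'.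
by subst l l'.
Qed.

Lemma tail_bisection la sg g : X g.1.1 -> X g.2 -> tail_eq la sg g.1.1 g.2 ->
  g.1.2 = d la * (d sg)^-1 -> bisection la sg g.
Proof. by move=> Xx Xy A; have [xla ysg _ _] := A; apply: tail_gbasic => //; apply/ZcylP. Qed.

Lemma bisection_regraft la sg g : bisection la sg g -> g.1.1 = regraft sg la g.2.
Proof.
by move=> /bisection_tail [Xx Xy _ A]; apply: (tail_eq_regraft HG (proj1 Xx) (proj1 Xy)).
Qed.

Lemma regraft_bisection la sg y : FA la -> src sg = src la -> X y -> y sg ->
  bisection la sg ((regraft sg la y, d la * (d sg)^-1), y).
Proof.
move=> Fla hs Xy ysg; have A := regraft_tail_eq HG (proj1 Xy) ysg hs.
apply: tail_bisection => //=; have [xla _ _ _] := A.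
exact: path_spaceP Fla (regraft_filter HG (proj1 Xy) ysg hs) xla.
Qed.

Lemma bisection_gsrc_inj la sg g1 g2 : bisection la sg g1 -> bisection la sg g2 ->
  gsrc g1 = gsrc g2 -> g1 = g2.
Proof.
move=> W1 W2; rewrite /gsrc.
have [[_ _ q1 _] [_ _ q2 _]] := conj (bisection_tail W1) (bisection_tail W2).
move: (bisection_regraft W1) (bisection_regraft W2) q1 q2.
by case: g1 {W1 W2} => [[? ?] ?]; case: g2 => [[? ?] ?] /= -> -> -> -> ->.
Qed.

Lemma bisection_open la sg : OG (bisection la sg).
Proof. by apply: gbasic_open; apply: path_open_Zcyl. Qed.

Lemma bisection_gsrc_image la sg : FA la -> src sg = src la ->
  (@gsrc Q C) @` bisection la sg = Zcyl sg.
Proof.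
move=> Fla hs; apply/seteqP; split.
  by move=> _ [g /bisection_tail [_ Xy _ [_ ysg _ _]] <-]; apply/ZcylP.
move=> y /ZcylP [ysg Xy].
by exists (regraft sg la y, d la * (d sg)^-1, y); first exact: regraft_bisection.
Qed.

Lemma bisection_gsrc_preimage la sg V : PO V ->
  OG (bisection la sg `&` (@gsrc Q C) @^-1` V).
Proof.
move=> pV; have -> : bisection la sg `&` (@gsrc Q C) @^-1` V =
    gb (d la) (d sg) (Zcyl la) (Zcyl sg `&` V).
  apply/seteqP; split; first by move=> g [[? ? ? ? ?] ?]; split.
  by move=> g [? ? ? [? ?] ?]; split.
apply: gbasic_open; first exact: path_open_Zcyl.
by apply: path_openI => //; apply: path_open_Zcyl.
Qed.

Lemma regraft_open la sg U : FA la -> src sg = src la -> PO U ->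
  PO [set y | Zcyl sg y /\ U (regraft sg la y)].
Proof.
move=> Fla hs /path_openP [UX HU]; apply/path_openP; split; first by move=> y [[]].
move=> y [/ZcylP [ysg Xy] /[dup] /UX [ft _] /HU [F [F' [fF fF' cx sub]]]].
have [F1 [G1 [fF1 fG1 cy cont]]] := regraft_cyl HG Fla hs (proj1 Xy) cx.
exists (F1 `|` [set sg]), G1; split.
- by rewrite finite_setU; split; [apply: fF1 | apply: finite_set1].
- exact: fG1.
- by apply/cylP; case/cylP: cy => cF cG; split => // a [/cF|->].
move=> y' [/cylP [cF cG] Xy']; have y'sg : y' sg by apply: cF; right.
split; first exact/ZcylP.
have ry' : cyl F F' (regraft sg la y').
  by apply: cont; [exact: proj1 Xy' | apply/cylP; split => // a Fa; apply: cF; left].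
apply: sub; split => //; have [y'la _ _ _] := regraft_tail_eq HG (proj1 Xy') y'sg hs.
exact: path_spaceP Fla (regraft_filter HG (proj1 Xy') y'sg hs) y'la.
Qed.

Lemma bisection_gsrc_open la sg O : FA la -> src sg = src la -> OG O ->
  PO ((@gsrc Q C) @` (O `&` bisection la sg)).
Proof.
move=> Fla hs OO; apply: path_open_nbhd.
  by move=> _ [g [_ /bisection_tail [_ Xy _ _]] <-].
move=> _ [g [Og Wg] <-]; have [Xx Xy e A] := bisection_tail Wg.
have [p [q [U1 [V1 [pU1 pV1 gg sub]]]]] := groupoid_openP OO Og.
have [_ _ U1x V1y _] := gbasic_tail gg.
have [la' [sg' [xla' ysg' sub']]] := gbasic_refine (gbasic_ends Wg U1x V1y) gg.
set N := [set y | Zcyl sg y /\ (Zcyl la' `&` U1) (regraft sg la y)] `&` (Zcyl sg' `&` V1).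
exists N.
  apply: path_openI; last by apply: path_openI => //; apply: path_open_Zcyl.
  by apply: regraft_open => //; apply: path_openI => //; apply: path_open_Zcyl.
split.
  have [_ ysg _ _] := A; have gx := bisection_regraft Wg.
  split; last by split => //; apply/ZcylP.
  by split; [apply/ZcylP | rewrite /= -gx; split => //; apply/ZcylP].
move=> y [[/ZcylP [ysg Xy'] Ux'] Vy']; have W' := regraft_bisection Fla hs Xy' ysg.
exists (regraft sg la y, d la * (d sg)^-1, y) => //; split => //.
by apply/sub/sub'; apply: gbasic_ends W' Ux' Vy'.
Qed.

Lemma path_groupoid_bisection g : G g -> exists la sg,
  [/\ FA la, FA sg, src sg = src la & bisection la sg g].
Proof.
move=> Gg; have [Xx Xy [l [l' [A e]]]] := path_groupoid_tail Gg.
have [[fx [k [xk Fk]]] [fy [k' [yk Fk']]]] := conj Xx Xy.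
have [xl yl hs _] := A.
have [r [xr [al [hal Ea]] kr]] := filter_directed fx xl xk.
have A1 : tail_eq (comp l al) (comp l' al) g.1.1 g.2.
  by apply: tail_eq_ext; rewrite -?Ea.
have [_ y1 hs1 _] := A1.
have [r' [yr' [be [hbe Eb]] kr']] := filter_directed fy y1 yk.
have A2 := tail_eq_ext_r A1 (esym hbe) (eq_ind _ _ yr' _ Eb).
exists (comp (comp l al) be), (comp (comp l' al) be); split.
- by apply: (FA_prec (FA_prec Fk kr)); rewrite Ea; apply: prec_comp; rewrite hs1.
- by rewrite -Eb; apply: FA_prec Fk' kr'.
- by case: A2.
have hl' : src l' = rng al by rewrite -hs.
have hbe' : src al = rng be by rewrite -hbe src_comp.
apply: tail_bisection => //.
by rewrite e !(deg_comp HG) ?src_comp // !mulgKA.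
Qed.

Lemma bisection_compact la sg : FA la -> FA sg -> src sg = src la ->
  is_compact G OG (bisection la sg).
Proof.
move=> Fla Fsg hs; apply: (compact_injective_open_map (f := @gsrc Q C)).
- by move=> g [].
- exact: bisection_gsrc_inj.
- by move=> W; apply: bisection_gsrc_open.
rewrite bisection_gsrc_image //.
exact: cyl_compact (mor_countable HG) Fsg erefl.
Qed.

Lemma path_groupoid_locally_compact : locally_compact G OG.
Proof.
move=> g /path_groupoid_bisection [la [sg [Fla Fsg hs Wg]]].
exists (bisection la sg), (bisection la sg); split => //; first exact: bisection_open.
exact: bisection_compact.
Qed.

Lemma path_groupoid_local_homeo : local_homeo G OG X PO (@gsrc Q C).
Proof.
split; first by move=> g /path_groupoid_tail [].
move=> g /path_groupoid_bisection [la [sg [Fla Fsg hs Wg]]].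
exists (bisection la sg); split => //.
- exact: bisection_open.
- by rewrite bisection_gsrc_image //; apply: path_open_Zcyl.
- exact: bisection_gsrc_inj.
split => [V OV VW|V pV]; last exact: bisection_gsrc_preimage.
by rewrite -(setIidl VW); apply: bisection_gsrc_open.
Qed.

Lemma path_groupoid_ample :
  ample G OG X PO (@gsrc Q C) (@grng Q C) (@gmul Q C) (@ginv Q C).
Proof.
split; last exact: path_space_compact_open_basis (mor_countable HG).
split; [exact: path_groupoid_topological | exact: path_groupoid_locally_compact |
  exact: path_space_locally_compact (mor_countable HG) | exact: path_space_hausdorff |
  exact: path_groupoid_local_homeo].
Qed.

Lemma path_groupoid_second_countable : second_countable G OG.
Proof.
set FS := [set A : set Lam | A `<=` setT /\ finite_set A].
set S := [set: Lam] `*` [set: Lam] `*` FS `*` FS `*` FS `*` FS.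
set basic := fun t : Lam * Lam * set Lam * set Lam * set Lam * set Lam =>
  let: (l, l', F, F', F1, G1) := t in
  gb (d l) (d l') (cyl F F' `&` X) (cyl F1 G1 `&` X).
have cL := mor_countable HG.
have cFS : countable FS by apply: countable_finite_subset.
exists (basic @` S); split.
- by apply: sub_countable (card_image_le basic S) _; repeat apply: countableX.
- move=> _ [[[[[[l l'] F1] F2] F3] F4] [[[[[_ _] [_ f1]] [_ f2]] [_ f3]] [_ f4]] <-].
  by apply: gbasic_open; apply: path_open_cyl.
move=> W g OW Wg.
have [p [q [U [V [pU pV gg sub]]]]] := groupoid_openP OW Wg.
have [Xx Xy Ux Vy [e [l [l' [dl dl' A]]]]] := gbasic_tail gg.
have [_ /(_ _ Ux) [F [F' [fF fF' cx subU]]]] := (path_openP U).1 pU.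
have [_ /(_ _ Vy) [F1 [G1 [fF1 fG1 cy subV]]]] := (path_openP V).1 pV.
exists (basic (l, l', F, F', F1, G1)); split.
- by exists (l, l', F, F', F1, G1).
- by apply: tail_gbasic => //; rewrite e dl dl'.
by rewrite -dl -dl' in sub; apply: subset_trans sub; apply: gbasicS.
Qed.

End PathGroupoidTopology.

(** * The boundary-path groupoid *)

Section BoundaryPathGroupoid.
Variables (Q : groupType) (P : set Q) (C : category) (d : mor C -> Q).
Hypothesis HG : is_Pgraph P d.
Local Notation Lam := (mor C).
Local Notation arrow := (set Lam * Q * set Lam)%type.
Local Notation X := (@path_space C).
Local Notation PO := (@path_opens C).
Local Notation BX := (@bpath_space C).
Local Notation BPO := (@bpath_opens C).
Local Notation G := (path_groupoid P d).
Local Notation OG := (groupoid_opens P d).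
Local Notation BG := (bpath_groupoid P d).
Local Notation BOG := (bgroupoid_opens P d).
Local Notation gs := (@gsrc Q C).
Implicit Types (la sg : Lam) (x y : set Lam) (U V : set (set Lam)).
Implicit Types (g h : arrow) (W O : set arrow).

Lemma bpath_space_sub : BX `<=` X. Proof. by move=> x []. Qed.

Lemma bpath_groupoid_sub : BG `<=` G. Proof. by move=> g []. Qed.

Lemma bpath_space_closed x : X x -> ~ BX x ->
  exists U, [/\ PO U, U x & U `&` BX = set0].
Proof.
move=> Xx /not_andP [//|/existsNP [U /not_implyP [pU /not_implyP [Ux nU]]]].
exists U; split => //; apply/seteqP; split => // z [Uz [_ Hz]].
by case: nU; apply: Hz.
Qed.

(* The boundary is invariant: [regraft] preserves maximality and is continuous,
   so it carries maximal paths near [y] to maximal paths near [x]. *)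
Lemma bpath_space_tail la sg x y : FA la -> tail_eq la sg x y -> X x -> BX y -> BX x.
Proof.
move=> Fla A Xx [Xy By]; split => // U pU Ux.
have [_ ysg hs _] := A.
have ex : x = regraft sg la y := tail_eq_regraft HG (proj1 Xx) (proj1 Xy) A.
have pN := regraft_open HG Fla (esym hs) pU.
have Ny : [set y | Zcyl sg y /\ U (regraft sg la y)] y by split; [apply/ZcylP | rewrite -ex].
have [y2 [[/ZcylP [y2sg Xy2] Uy2] [my2 _]]] := By _ pN Ny.
exists (regraft sg la y2); split => //; split.
  exact: (regraft_maximal HG my2 y2sg (esym hs)).
by case: pU Uy2 => U0 [_ ->] [].
Qed.

Lemma bpath_groupoid_closed g : G g -> ~ BG g ->
  exists W, [/\ OG W, W g & W `&` BG = set0].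
Proof.
move=> Gg nB; have [Xx Xy _] := path_groupoid_tail HG Gg.
have [Bx|nBx] := pselect (BX g.1.1); last first.
  have [U [pU Ux dis]] := bpath_space_closed Xx nBx.
  exists [set g | [/\ G g, U g.1.1 & X g.2]]; split => //.
    exact: (groupoid_open_ends HG pU (@path_openT C)).
  apply/seteqP; split => // k [[_ Uk _] [_ Bk _]].
  by have : (U `&` BX) k.1.1 by []; rewrite dis.
have [By|nBy] := pselect (BX g.2); first by case: nB.
have [V [pV Vy dis]] := bpath_space_closed Xy nBy.
exists [set g | [/\ G g, X g.1.1 & V g.2]]; split => //.
  exact: (groupoid_open_ends HG (@path_openT C) pV).
apply/seteqP; split => // k [[_ _ Vk] [_ _ Bk]].
by have : (V `&` BX) k.2 by []; rewrite dis.
Qed.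

Lemma bpath_space_compact_open_basis : compact_open_basis BX BPO.
Proof.
move=> _ x [U [pU ->]] [Ux Bx].
have [K [pK cK Kx KU]] := path_space_compact_open_basis (mor_countable HG) pU Ux.
exists (K `&` BX); split; [by exists K | | by [] | by move=> z [/KU]].
apply: compact_subspace; first exact: subIsetr.
by apply: compact_setI_closed cK _ => z; apply: bpath_space_closed.
Qed.

Lemma bpath_space_open : BPO BX.
Proof.
by exists X; split; [apply: path_openT | rewrite setIidr //; apply: bpath_space_sub].
Qed.

Lemma bpath_groupoid_topological :
  topological_groupoid BG BOG gs (@grng Q C) (@gmul Q C) (@ginv Q C).
Proof.
apply: topological_groupoid_restrict (path_groupoid_topological HG) _ _ _ _.
- exact: bpath_groupoid_sub.
- by move=> W [].
- by move=> g [Gg Bx By]; split => //; apply: (path_groupoid_ginv HG).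
- by move=> g h [_ Bx _] [_ _ Bz] _ Ggh; split.
Qed.

Lemma bisection_gsrc_bpath la sg O : FA la ->
  gs @` (O `&` bisection P d la sg `&` BG) = gs @` (O `&` bisection P d la sg) `&` BX.
Proof.
move=> Fla; apply/seteqP; split.
  by move=> _ [g [[Og Wg] [_ _ By]] <-]; split => //; exists g.
move=> _ [[g [Og Wg] <-] By]; exists g => //; split => //.
have [Xx Xy _ A] := bisection_tail HG Wg.
by split => //; [case: Wg | apply: bpath_space_tail A Xx By].
Qed.

Lemma bpath_groupoid_local_homeo : local_homeo BG BOG BX BPO gs.
Proof.
split; first by move=> g [].
move=> g [Gg Bx By]; have [la [sg [Fla Fsg hs Wg]]] := path_groupoid_bisection HG Gg.
set W0 := bisection P d la sg.
have OW0 : OG W0 by apply: (bisection_open HG).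
exists (W0 `&` BG); split.
- by exists W0.
- by split.
- exists (gs @` (W0 `&` W0)); split; first exact: (bisection_gsrc_open HG).
  by rewrite -bisection_gsrc_bpath // setIid.
- by move=> g1 g2 [W1 _] [W2 _]; apply: (bisection_gsrc_inj HG W1 W2).
split.
  move=> _ [V0 [OV0 ->]] sub.
  have -> : V0 `&` BG = V0 `&` W0 `&` BG.
    apply/seteqP; split; last by move=> k [[? _] ?].
    by move=> k [V0k Bk]; have [W0k _] := sub k (conj V0k Bk).
  rewrite bisection_gsrc_bpath //; exists (gs @` (V0 `&` W0)); split => //.
  exact: (bisection_gsrc_open HG).
move=> _ [V1 [pV1 ->]].
exists (W0 `&` gs @^-1` V1); split; first exact: (bisection_gsrc_preimage HG).
apply/seteqP; split; first by move=> k [[W0k Bk] [V1k _]]; split => //; split.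
by move=> k [[W0k V1k] Bk]; split => //; split => //; case: Bk.
Qed.

Lemma bpath_groupoid_locally_compact : locally_compact BG BOG.
Proof.
move=> g [Gg Bx By]; have [la [sg [Fla Fsg hs Wg]]] := path_groupoid_bisection HG Gg.
exists (bisection P d la sg `&` BG), (bisection P d la sg `&` BG); split => //.
  by exists (bisection P d la sg); split => //; apply: (bisection_open HG).
apply: compact_subspace; first exact: subIsetr.
apply: compact_setI_closed (bisection_compact HG Fla Fsg hs) _ => k.
exact: bpath_groupoid_closed.
Qed.

Lemma bpath_groupoid_ample :
  ample BG BOG BX BPO gs (@grng Q C) (@gmul Q C) (@ginv Q C).
Proof.
split; last exact: bpath_space_compact_open_basis.
split; [exact: bpath_groupoid_topological | exact: bpath_groupoid_locally_compact | | |
  exact: bpath_groupoid_local_homeo].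
- exact: compact_open_basis_locally_compact bpath_space_open bpath_space_compact_open_basis.
- exact: subspace_hausdorff (@path_space_hausdorff C) bpath_space_sub.
Qed.

Lemma bpath_groupoid_second_countable : second_countable BG BOG.
Proof. exact: subspace_second_countable (path_groupoid_second_countable HG). Qed.

Lemma bpath_groupoid_hausdorff : is_hausdorff BG BOG.
Proof. exact: subspace_hausdorff (path_groupoid_hausdorff HG) bpath_groupoid_sub. Qed.

End BoundaryPathGroupoid.

Theorem theorem5p18 (Q : groupType) (P : set Q) (C : category) (d : mor C -> Q) :
  wqlo P -> is_Pgraph P d -> @FA C !=set0 ->
  (ample (path_groupoid P d) (groupoid_opens P d)
         (@path_space C) (@path_opens C) (@gsrc Q C) (@grng Q C) (@gmul Q C) (@ginv Q C)
   /\ second_countable (path_groupoid P d) (groupoid_opens P d)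
   /\ is_hausdorff (path_groupoid P d) (groupoid_opens P d))
  /\
  (ample (bpath_groupoid P d) (bgroupoid_opens P d)
         (@bpath_space C) (@bpath_opens C) (@gsrc Q C) (@grng Q C) (@gmul Q C) (@ginv Q C)
   /\ second_countable (bpath_groupoid P d) (bgroupoid_opens P d)
   /\ is_hausdorff (bpath_groupoid P d) (bgroupoid_opens P d)).
Proof.
move=> _ HG _; split.
  split; first exact: path_groupoid_ample HG.
  by split; [exact: path_groupoid_second_countable | exact: path_groupoid_hausdorff].
split; first exact: bpath_groupoid_ample HG.
by split; [exact: bpath_groupoid_second_countable | exact: bpath_groupoid_hausdorff].
Qed.
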